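(* Under the standing assumptions below, let $\rho>0$, $\epsilon>0$, and let $(x_\epsilon,y_\epsilon,\lambda_\epsilon,z_\epsilon)\in\mathcal X\times\mathcal Y\times\Lambda\times\mathcal Y$ be an $\epsilon$-optimal solution of the min-max-min problem $\min_{x\in\mathcal X}\max_{y\in\mathcal Y,\lambda\in\Lambda}\min_{z\in\mathcal Y}P_\rho(x,y,\lambda,z)$. Then $$\Phi(x_\epsilon)\le\Phi_\rho^*+2\epsilon+\delta_\rho(x_\epsilon),\qquad f(x_\epsilon,y_\epsilon,\lambda_\epsilon)\ge\Phi^*-2\epsilon-\delta_\rho(x_\epsilon),$$ $$g(y_\epsilon,\lambda_\epsilon)-\min_{z\in\mathcal Y}g(z,\lambda_\epsilon)\le\rho^{-1}\big(f_{\rm hi}-\Phi^*+2\epsilon+\delta_\rho(x_\epsilon)\big).$$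
   Context: Standing setting. $\mathcal X\subset\mathbb R^{d_x}$, $\mathcal Y\subset\mathbb R^{d_y}$, $\Lambda\subset\mathbb R^{d_\lambda}$ are nonempty convex compact sets. $\bar f:\mathbb R^{d_x}\times\mathbb R^{d_y}\to\mathbb R$ is continuously differentiable with $\nabla\bar f$ Lipschitz on $\mathcal X\times\mathcal Y$; $A\in\mathbb R^{d_\lambda\times d_x}$, $B\in\mathbb R^{d_\lambda\times d_y}$, $c\in\mathbb R^{d_\lambda}$, and $f(x,y,\lambda):=\bar f(x,y)+\lambda^T(Ax+By-c)$. $g:\mathbb R^{d_y}\times\mathbb R^{d_\lambda}\to\mathbb R$ is continuously differentiable with $\nabla g$ Lipschitz on $\mathcal Y\times\Lambda$, and $g(\cdot,\lambda)$ is convex for each $\lambda\in\Lambda$. Definitions: $f_{\rm hi}:=\max_{\mathcal X\times\mathcal Y\times\Lambda}f$; $\mathcal F_{\rm low}:=\{(y,\lambda)\in\mathcal Y\times\Lambda:\ g(y,\lambda)=\min_{z\in\mathcal Y}g(z,\lambda)\}$; $h_g(y,\lambda):=g(y,\lambda)-\min_{z\in\mathcal Y}g(z,\lambda)$; $P_\rho(x,y,\lambda,z):=f(x,y,\lambda)-\rho(g(y,\lambda)-g(z,\lambda))$; $\Psi_\rho(x,y,\lambda):=\min_{z\in\mathcal Y}P_\rho(x,y,\lambda,z)$; $F_\rho(x):=\max_{y\in\mathcal Y,\lambda\in\Lambda}\Psi_\rho(x,y,\lambda)$; $\Phi_\rho^*:=\min_{x\in\mathcal X}F_\rho(x)$;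 $\Phi(x):=\max_{(y,\lambda)\in\mathcal F_{\rm low}}f(x,y,\lambda)$; $\Phi^*:=\min_{x\in\mathcal X}\Phi(x)$; $\delta_\rho(x):=|F_\rho(x)-\Phi(x)|$. A point $(x_\epsilon,y_\epsilon,\lambda_\epsilon,z_\epsilon)\in\mathcal X\times\mathcal Y\times\Lambda\times\mathcal Y$ is an $\epsilon$-optimal solution of $\min_{x}\max_{y,\lambda}\min_{z}P_\rho$ if (i) $P_\rho(x_\epsilon,y_\epsilon,\lambda_\epsilon,z_\epsilon)-\min_{z\in\mathcal Y}P_\rho(x_\epsilon,y_\epsilon,\lambda_\epsilon,z)\le\epsilon$, (ii) $\max_{y\in\mathcal Y,\lambda\in\Lambda}\min_{z\in\mathcal Y}P_\rho(x_\epsilon,y,\lambda,z)-P_\rho(x_\epsilon,y_\epsilon,\lambda_\epsilon,z_\epsilon)\le\epsilon$, (iii) $P_\rho(x_\epsilon,y_\epsilon,\lambda_\epsilon,z_\epsilon)-\Phi_\rho^*\le\epsilon$. *)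

From HB Require Import structures.
From mathcomp Require Import all_boot all_order all_algebra.
From mathcomp Require Import all_classical all_reals all_analysis.
Set Implicit Arguments. Unset Strict Implicit. Unset Printing Implicit Defensive.
Import Order.TTheory GRing.Theory Num.Theory.
Import numFieldNormedType.Exports.
Local Open Scope classical_set_scope.
Local Open Scope ring_scope.

Section Defs.
Variable R : realType.

Definition cvx_set (n : nat) (S : set 'rV[R]_n) : Prop :=
  forall a b t, S a -> S b -> 0 <= t -> t <= 1 -> S ((1 - t) *: a + t *: b).

Definition cvx_fun (n : nat) (h : 'rV[R]_n -> R) : Prop :=
  forall a b t, 0 <= t -> t <= 1 ->
    h ((1 - t) *: a + t *: b) <= (1 - t) * h a + t * h b.

Definition C1 (V : normedModType R) (h : V -> R) : Prop :=
  (forall p, differentiable h p) /\ (forall v, continuous (fun p => 'd h p v)).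

Definition grad_lipschitz_on (V : normedModType R) (h : V -> R) (S : set V) : Prop :=
  exists L : R, forall p q v, S p -> S q ->
    `|'d h p v - 'd h q v| <= L * `|p - q| * `|v|.

Definition dotr (n : nat) (u v : 'rV[R]_n) : R := \sum_(i < n) u 0 i * v 0 i.

Variables (dx dy dl : nat).
Variables (X : set 'rV[R]_dx) (Y : set 'rV[R]_dy) (Lam : set 'rV[R]_dl).
Variable fbar : 'rV[R]_dx * 'rV[R]_dy -> R.
Variables (A : 'M[R]_(dl, dx)) (B : 'M[R]_(dl, dy)) (c : 'rV[R]_dl).
Variable g : 'rV[R]_dy * 'rV[R]_dl -> R.

(* f(x,y,lambda) = fbar(x,y) + lambda^T (A x + B y - c) *)
Definition fL (x : 'rV[R]_dx) (y : 'rV[R]_dy) (l : 'rV[R]_dl) : R :=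
  fbar (x, y) + dotr l (x *m A^T + y *m B^T - c).

Definition f_hi : R :=
  sup [set fL t.1 t.2.1 t.2.2 | t in [set t | X t.1 /\ Y t.2.1 /\ Lam t.2.2]].

Definition gmin (l : 'rV[R]_dl) : R := inf [set g (z, l) | z in Y].

Definition F_low : set ('rV[R]_dy * 'rV[R]_dl) :=
  [set p | Y p.1 /\ Lam p.2 /\ g p = gmin p.2].

Definition h_g (y : 'rV[R]_dy) (l : 'rV[R]_dl) : R := g (y, l) - gmin l.

Definition P_rho (rho : R) x y l z : R := fL x y l - rho * (g (y, l) - g (z, l)).

Definition Psi_rho (rho : R) x y l : R := inf [set P_rho rho x y l z | z in Y].

Definition F_rho (rho : R) x : R :=
  sup [set Psi_rho rho x p.1 p.2 | p in [set p | Y p.1 /\ Lam p.2]].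

Definition Phi_rho_star (rho : R) : R := inf [set F_rho rho x | x in X].

Definition Phi x : R := sup [set fL x p.1 p.2 | p in F_low].

Definition Phi_star : R := inf [set Phi x | x in X].

Definition delta_rho (rho : R) x : R := `|F_rho rho x - Phi x|.

Definition eps_optimal (rho eps : R) x y l z : Prop :=
  [/\ X x /\ Y y /\ Lam l /\ Y z,
      P_rho rho x y l z - Psi_rho rho x y l <= eps,
      F_rho rho x - P_rho rho x y l z <= eps &
      P_rho rho x y l z - Phi_rho_star rho <= eps].

End Defs.

(* Since rho > 0, the inner minimisation over z has a closed form:
   Psi_rho x y l = f x y l - rho * h_g y l.  The three epsilon-optimality
   conditions link P_rho at the approximate solution to Psi_rho, to F_rho x_eps
   and to Phi_rho^*, and delta_rho x_eps bridges F_rho x_eps and Phi x_eps.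
   Together with Phi^* <= Phi x_eps, f <= f_hi and h_g >= 0 the three bounds are
   then linear consequences.  Compactness and continuity only serve to make the
   infima and suprema well behaved. *)

From Pilot Require Import Defs.
From HB Require Import structures.
From mathcomp Require Import all_boot all_order all_algebra.
From mathcomp Require Import all_classical all_reals all_analysis.
From mathcomp Require Import ring lra.
Import Order.TTheory GRing.Theory Num.Theory.
Import numFieldNormedType.Exports.
Local Open Scope classical_set_scope.
Local Open Scope ring_scope.

Section ContinuityAndBounds.
Context {R : realType} {T : topologicalType}.

Lemma compact_has_ubound (A : set R) : compact A -> has_ubound A.
Proof.
move=> /compact_bounded[M [_ MA]]; exists (`|M| + 1) => y /(MA (`|M| + 1)) My.
by rewrite (le_trans (ler_norm y)) ?My // (le_lt_trans (ler_norm M)) ?ltrDl.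
Qed.

Lemma compact_has_lbound (A : set R) : compact A -> has_lbound A.
Proof.
move=> cA; apply/has_lb_ubN/compact_has_ubound.
exact: continuous_compact (continuous_subspaceT opp_continuous) cA.
Qed.

Lemma continuous_sum I (r : seq I) (F : I -> T -> R) :
  (forall i, continuous (F i)) -> continuous (fun t => \sum_(i <- r) F i t).
Proof. by move=> Fc; apply: (continuous_big (@add_continuous R^o)) => i _; exact: Fc. Qed.

Lemma continuous_coord n (u : T -> 'rV[R]_n) j :
  continuous u -> continuous (fun t => u t 0 j).
Proof. by move=> uc t; exact: continuous_comp (uc t) (@coord_continuous R 1 n 0 j (u t)). Qed.

Lemma continuous_mulmx_coord m n (u : T -> 'rV[R]_m) (M : 'M[R]_(m, n)) j :
  continuous u -> continuous (fun t => (u t *m M) 0 j).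
Proof.
move=> uc; under eq_fun do rewrite mxE.
apply: continuous_sum => i t.
by apply: continuousM; [exact: continuous_coord | exact: cst_continuous].
Qed.

Lemma continuous_dotr n (u v : T -> 'rV[R]_n) :
  (forall i, continuous (fun t => u t 0 i)) ->
  (forall i, continuous (fun t => v t 0 i)) ->
  continuous (fun t => dotr (u t) (v t)).
Proof. by move=> uc vc; apply: continuous_sum => i t; exact: continuousM (uc i t) (vc i t). Qed.

End ContinuityAndBounds.

Section PenaltyReformulation.
Variables (R : realType) (dx dy dl : nat).
Variables (X : set 'rV[R]_dx) (Y : set 'rV[R]_dy) (Lam : set 'rV[R]_dl).
Variables (fbar : 'rV[R]_dx * 'rV[R]_dy -> R) (A : 'M[R]_(dl, dx)) (B : 'M[R]_(dl, dy)).
Variables (c : 'rV[R]_dl) (g : 'rV[R]_dy * 'rV[R]_dl -> R).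
Hypothesis Y_neq0 : Y !=set0.
Hypotheses (X_compact : compact X) (Y_compact : compact Y) (Lam_compact : compact Lam).
Hypotheses (fbar_cont : continuous fbar) (g_cont : continuous g).

Local Notation fL := (fL fbar A B c).
Local Notation gmin := (gmin Y g).
Local Notation h_g := (h_g Y g).
Local Notation feasible := [set t | X t.1 /\ Y t.2.1 /\ Lam t.2.2].

Lemma continuous_fL :
  continuous (fun t : 'rV[R]_dx * ('rV[R]_dy * 'rV[R]_dl) => fL t.1 t.2.1 t.2.2).
Proof.
have xc : continuous (fun t : 'rV[R]_dx * ('rV[R]_dy * 'rV[R]_dl) => t.1).
  by move=> t; exact: cvg_fst.
have yc : continuous (fun t : 'rV[R]_dx * ('rV[R]_dy * 'rV[R]_dl) => t.2.1).
  by move=> t; apply: (continuous_comp _ _); [exact: cvg_snd | exact: cvg_fst].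
have lc : continuous (fun t : 'rV[R]_dx * ('rV[R]_dy * 'rV[R]_dl) => t.2.2).
  by move=> t; apply: (continuous_comp _ _); exact: cvg_snd.
rewrite /Defs.fL => t.
apply: (@continuousD _ _ _ (fun t : 'rV[R]_dx * ('rV[R]_dy * 'rV[R]_dl) => fbar (t.1, t.2.1))).
  exact: continuous_comp (cvg_pair (xc t) (yc t)) (fbar_cont _).
move: t; apply: continuous_dotr => i; first exact: continuous_coord.
have -> : (fun t : 'rV[R]_dx * ('rV[R]_dy * 'rV[R]_dl) => (t.1 *m A^T + t.2.1 *m B^T - c) 0 i)
    = (fun t => (t.1 *m A^T) 0 i + (t.2.1 *m B^T) 0 i - c 0 i).
  by apply/funext => t; rewrite !mxE.
move=> t; apply: (continuousB (continuousD (continuous_mulmx_coord _ _ _ A^T i xc t)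
  (continuous_mulmx_coord _ _ _ B^T i yc t))).
exact: cst_continuous.
Qed.

Lemma compact_fL_image : compact [set fL t.1 t.2.1 t.2.2 | t in feasible].
Proof.
apply: continuous_compact (continuous_subspaceT continuous_fL) _.
exact: compact_setX X_compact (compact_setX Y_compact Lam_compact).
Qed.

Lemma has_lbound_g_slice l : has_lbound [set g (z, l) | z in Y].
Proof.
apply/compact_has_lbound/(continuous_compact _ Y_compact)/continuous_subspaceT => z.
have pair_cont : {for z, continuous (fun z : 'rV[R]_dy => (z, l))}.
  by apply: (@cvg_pair _ _ _ (nbhs z) (nbhs z) (nbhs l)); [exact: cvg_id | exact: cvg_cst].
exact: continuous_comp pair_cont (g_cont _).
Qed.

Lemma gmin_le y l : Y y -> gmin l <= g (y, l).
Proof. by move=> Yy; apply: (ge_inf (has_lbound_g_slice l)); exists y. Qed.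

Lemma h_g_ge0 y l : Y y -> 0 <= h_g y l.
Proof. by move=> Yy; rewrite subr_ge0 gmin_le. Qed.

Lemma Psi_rhoE rho x y l :
  0 < rho -> Psi_rho Y fbar A B c g rho x y l = fL x y l - rho * h_g y l.
Proof.
move=> rho_gt0; set S := [set P_rho fbar A B c g rho x y l z | z in Y].
have S_neq0 : S !=set0 by case: Y_neq0 => z Yz; exists (P_rho fbar A B c g rho x y l z), z.
have P_rhoE z : P_rho fbar A B c g rho x y l z
    = fL x y l - rho * h_g y l + rho * (g (z, l) - gmin l).
  by rewrite /P_rho /Defs.h_g; ring.
have S_lb : lbound S (fL x y l - rho * h_g y l).
  move=> _ [z Yz <-]; rewrite P_rhoE lerDl.
  by apply: mulr_ge0; [exact: ltW | exact: h_g_ge0].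
apply/eqP; rewrite eq_le (lb_le_inf S_neq0 S_lb) andbT.
have Psi_le z : Y z -> Psi_rho Y fbar A B c g rho x y l <= P_rho fbar A B c g rho x y l z.
  by move=> Yz; apply: (ge_inf (ex_intro _ _ S_lb)); exists z.
suff : (Psi_rho Y fbar A B c g rho x y l - fL x y l + rho * g (y, l)) / rho <= gmin l.
  by rewrite ler_pdivrMr // /Defs.h_g => ?; lra.
apply: lb_le_inf; first by case: Y_neq0 => z Yz; exists (g (z, l)), z.
move=> _ [z Yz <-]; rewrite ler_pdivrMr //.
by have := Psi_le z Yz; rewrite /P_rho; lra.
Qed.

Lemma fL_le_f_hi x y l : X x -> Y y -> Lam l -> fL x y l <= f_hi X Y Lam fbar A B c.
Proof.
move=> Xx Yy Ll; apply: (ub_le_sup (compact_has_ubound _ compact_fL_image)).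
by exists (x, (y, l)).
Qed.

Lemma fL_le_Phi x p : X x -> F_low Y Lam g p -> fL x p.1 p.2 <= Phi Y Lam fbar A B c g x.
Proof.
move=> Xx Fp; apply: ub_le_sup; last by exists p.
apply: subset_has_ubound (compact_has_ubound _ compact_fL_image).
by move=> _ [q [Yq [Lq _]] <-]; exists (x, q).
Qed.

(* If F_low is empty, Phi x is sup set0 = 0; hence the lower bound min m 0. *)
Lemma Phi_star_le_Phi x : X x -> Phi_star X Y Lam fbar A B c g <= Phi Y Lam fbar A B c g x.
Proof.
move=> Xx; apply: ge_inf; last by exists x.
have [m fL_ge] := compact_has_lbound _ compact_fL_image.
exists (Num.min m 0) => _ [x' Xx' <-].
have [[p Fp]|/set0P/negP/negbNE/eqP F_low0] := pselect (F_low Y Lam g !=set0).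
  have [Yp [Lp _]] := Fp.
  rewrite ge_min (le_trans (fL_ge _ _) (fL_le_Phi _ _ Xx' Fp)) //.
  by exists (x', p).
by rewrite /Phi F_low0 image_set0 sup0 ge_min lexx orbT.
Qed.

End PenaltyReformulation.

Theorem mainTheorem2 (R : realType) (dx dy dl : nat)
  (X : set 'rV[R]_dx) (Y : set 'rV[R]_dy) (Lam : set 'rV[R]_dl)
  (fbar : 'rV[R]_dx * 'rV[R]_dy -> R)
  (A : 'M[R]_(dl, dx)) (B : 'M[R]_(dl, dy)) (c : 'rV[R]_dl)
  (g : 'rV[R]_dy * 'rV[R]_dl -> R)
  (hXne : X !=set0) (hYne : Y !=set0) (hLne : Lam !=set0)
  (hXcvx : cvx_set X) (hYcvx : cvx_set Y) (hLcvx : cvx_set Lam)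
  (hXcpt : compact X) (hYcpt : compact Y) (hLcpt : compact Lam)
  (hfC1 : C1 fbar)
  (hfL : grad_lipschitz_on fbar [set p | X p.1 /\ Y p.2])
  (hgC1 : C1 g)
  (hgL : grad_lipschitz_on g [set p | Y p.1 /\ Lam p.2])
  (hgcvx : forall l, Lam l -> cvx_fun (fun y => g (y, l)))
  (rho eps : R) (hrho : 0 < rho) (heps : 0 < eps)
  (xe : 'rV[R]_dx) (ye : 'rV[R]_dy) (le : 'rV[R]_dl) (ze : 'rV[R]_dy)
  (hopt : eps_optimal X Y Lam fbar A B c g rho eps xe ye le ze) :
  let delta := delta_rho Y Lam fbar A B c g rho xe in
  let PhiS := Phi_star X Y Lam fbar A B c g in
  [/\ Phi Y Lam fbar A B c g xe <= Phi_rho_star X Y Lam fbar A B c g rho + 2 * eps + delta,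
      fL fbar A B c xe ye le >= PhiS - 2 * eps - delta &
      h_g Y g ye le <= rho^-1 * (f_hi X Y Lam fbar A B c - PhiS + 2 * eps + delta)].
Proof.
move=> delta PhiS.
case: hopt => -[Xxe [Yye [Lle _]]] Psi_gap F_gap P_gap.
have fbar_cont : continuous fbar by move=> p; exact/differentiable_continuous/hfC1.1.
have g_cont : continuous g by move=> p; exact/differentiable_continuous/hgC1.1.
have PsiE : Psi_rho Y fbar A B c g rho xe ye le
    = fL fbar A B c xe ye le - rho * h_g Y g ye le by exact: Psi_rhoE.
have rho_h_g_ge0 : 0 <= rho * h_g Y g ye le by apply: mulr_ge0; [exact: ltW | apply: h_g_ge0].
have fL_le : fL fbar A B c xe ye le <= f_hi X Y Lam fbar A B c by apply: fL_le_f_hi.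
have PhiS_le : PhiS <= Phi Y Lam fbar A B c g xe by apply: Phi_star_le_Phi.
have : `|F_rho Y Lam fbar A B c g rho xe - Phi Y Lam fbar A B c g xe| <= delta by [].
rewrite ler_distl => /andP[F_ge F_le].
rewrite PsiE in Psi_gap; split; [lra | lra |].
rewrite -(ler_pM2l hrho) mulrA mulfV ?mul1r ?gt_eqF //; lra.
Qed.
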